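(* Let $d\ge3$ and let $\mathcal C\subset\mathbb T^d=\mathbb R^d/\mathbb Z^d$ be a smooth curve of length $L$ with unit speed parameterization $\gamma:[0,L]\to\mathbb T^d$. For a positive integer $E$ with $\mathcal E(E)=\{\mu\in\mathbb Z^d:|\mu|^2=E\}$ nonempty, let $N=\#\mathcal E(E)$ and $$r(t_1,t_2)=\frac1N\sum_{\mu\in\mathcal E(E)}\cos\left(2\pi\langle\mu,\gamma(t_1)-\gamma(t_2)\rangle\right).$$ Then there exists a constant $c_0>0$ (independent of $E$) such that for all $E$ and all $t_1\ne t_2\in[0,L]$ with $|t_2-t_1|<c_0/\sqrt E$ we have $r(t_1,t_2)\ne\pm1$.
   Context: A curve means a parameterized, compact, immersed curve. $r$ is the covariance function $\mathbb E[f(t_1)f(t_2)]$ of the restriction $f=F\circ\gamma$ of the arithmetic random wave $F(x)=N^{-1/2}\sum_{\mu\in\mathcal E(E)}a_\mu e^{2\pi i\langle\mu,x\rangle}$ ($a_\mu$ standard complex Gaussians, independent save for $a_{-\mu}=\overline{a_\mu}$). *)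

From HB Require Import structures.
From mathcomp Require Import all_boot all_order all_algebra.
From mathcomp Require Import all_classical all_reals all_analysis.
Set Implicit Arguments. Unset Strict Implicit. Unset Printing Implicit Defensive.
Import Order.TTheory GRing.Theory Num.Theory.
Local Open Scope ring_scope.

(* Every such mu has |mu_i| <= E,
   so we encode mu by a finite function m : 'I_d -> 'I_(2E+1) with
   mu_i = m_i - E.  This is a bijection between [latE d E] and
   E(E) = {mu in Z^d : |mu|^2 = E}. *)
Definition lat_coord (d E : nat) (m : {ffun 'I_d -> 'I_(2 * E).+1}) (i : 'I_d) : int :=
  (nat_of_ord (m i))%:Z - E%:Z.

Definition latE (d E : nat) : {set {ffun 'I_d -> 'I_(2 * E).+1}} :=
  [set m | \sum_(i < d) (lat_coord m i) ^+ 2 == E%:Z].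

(* The covariance r(t1,t2) = N^{-1} sum_{mu in E(E)} cos(2 pi <mu, gamma t1 - gamma t2>),
   with gamma given through a lift to R^d (coordinates gamma i). *)
Definition cov_r (R : realType) (d E : nat) (gamma : 'I_d -> R -> R) (t1 t2 : R) : R :=
  (#|latE d E|%:R)^-1 *
  \sum_(m in latE d E)
     cos (2 * pi * \sum_(i < d) (lat_coord m i)%:~R * (gamma i t1 - gamma i t2)).

(** For [|t1 - t2|] small compared with [1/sqrt E], every phase
    [2 pi <mu, gamma t1 - gamma t2>] with [mu] in E(E) lies in [(-pi/2, pi/2)],
    because [|mu_j| <= sqrt E] and each coordinate of [gamma] is 1-Lipschitz.
    All cosines are then positive, so [r <> -1], and [r = 1] forces
    [<mu, gamma t1 - gamma t2> = 0] for every [mu].  Since E(E) is stable under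
    permuting coordinates and changing signs, this makes [gamma t1 = gamma t2].
    But at [t1] some coordinate of [gamma'] has size at least [1/d], and the
    bound on [gamma''] keeps it away from [0] between [t1] and [t2], so that
    coordinate of [gamma] is strictly monotone there. *)

From HB Require Import structures.
From mathcomp Require Import all_boot all_order all_algebra perm.
From mathcomp Require Import all_classical all_reals all_analysis.
From mathcomp Require Import ring lra zify.
Import Order.TTheory GRing.Theory Num.Theory.
Local Open Scope ring_scope.

Section RealFacts.
Import numFieldNormedType.Exports.
Variable R : realType.
Implicit Types (a b s t : R) (f : R -> R).

Lemma MVT_between {f a b s t} :
  (forall x, derivable f x 1) -> a <= s <= b -> a <= t <= b ->
  exists xi, [/\ a <= xi <= b, `|xi - s| <= `|t - s|
    & f t - f s = derive1 f xi * (t - s)].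
Proof.
move=> df /andP[hs1 hs2] /andP[ht1 ht2].
have der (x : R) : is_derive x 1 f (derive1 f x) by rewrite derive1E; apply: derivableP.
have fc := derivable_within_continuous (fun x _ => df x).
case: (ltgtP s t) => [st|ts|<-].
- have [c /[!in_itv] /= /andP[sc ct] ->] := MVT st (fun x _ => der x) (fc _).
  exists c; split => //; first by apply/andP; split; lra.
  by rewrite !ger0_norm; lra.
- have [c /[!in_itv] /= /andP[tc cs] e] := MVT ts (fun x _ => der x) (fc _).
  exists c; split; first by apply/andP; split; lra.
    by rewrite !ler0_norm; lra.
  by rewrite -opprB e; lra.
- by exists s; rewrite !subrr mulr0 normr0; split => //; apply/andP.
Qed.

Lemma ler_dist_derive1_bound {f a b K s t} :
  (forall x, derivable f x 1) -> (forall x, a <= x <= b -> `|derive1 f x| <= K) ->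
  a <= s <= b -> a <= t <= b -> `|f t - f s| <= K * `|t - s|.
Proof.
move=> df hK hs ht; have [xi [hxi _ ->]] := MVT_between df hs ht.
by rewrite normrM ler_wpM2r // (hK _ hxi).
Qed.

Lemma neq_derive1_away0 f a b M delta s t :
  (forall x, derivable f x 1) -> (forall x, derivable (derive1 f) x 1) ->
  (forall x, a <= x <= b -> `|derive1 (derive1 f) x| <= M) ->
  a <= s <= b -> a <= t <= b -> s != t ->
  delta <= `|derive1 f s| -> M * `|t - s| < delta -> f t != f s.
Proof.
move=> df df1 hM hs ht st hd hMh.
have [xi [hxi xis ef]] := MVT_between df hs ht.
have M0 : 0 <= M := le_trans (normr_ge0 _) (hM _ hs).
have hdiff : `|derive1 f xi - derive1 f s| < delta.
  apply: le_lt_trans (ler_dist_derive1_bound df1 hM hs hxi) _.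
  exact: le_lt_trans (ler_wpM2l M0 xis) hMh.
have fxi0 : derive1 f xi != 0.
  by apply: contraTneq hdiff => ->; rewrite sub0r normrN -leNgt.
by rewrite -subr_eq0 ef mulf_neq0 // subr_eq0 eq_sym.
Qed.

Lemma bounded_on_itv (I : finType) (g : I -> R -> R) a b :
  (forall i, {within `[a, b], continuous (g i)}%classic) -> a <= b ->
  exists2 M, 0 <= M & forall i x, a <= x <= b -> `|g i x| <= M.
Proof.
move=> gc ab.
have bound1 i : exists M, forall x, a <= x <= b -> `|g i x| <= M.
  have [c1 _ h1] := EVT_max ab (gc i).
  have [c2 _ h2] := EVT_min ab (gc i).
  exists (`|g i c1| + `|g i c2|) => x hx; have xab : x \in `[a, b] by rewrite in_itv.
  have := h1 _ xab; have := h2 _ xab; have := ler_norm (g i c1).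
  have := ler_norm (- g i c2); rewrite normrN ler_norml.
  have := normr_ge0 (g i c1); have := normr_ge0 (g i c2); lra.
have [Mi hMi] := choice bound1.
exists (\sum_i `|Mi i|) => [|i x hx]; first exact: sumr_ge0.
apply: le_trans (hMi i x hx) (le_trans (ler_norm _) _).
by rewrite (bigD1 i) //= lerDl sumr_ge0.
Qed.

Lemma cos_eq1_norm_lt_pihalf (x : R) : `|x| < pi / 2 -> cos x = 1 -> x = 0.
Proof.
move=> hx e; have pi0 := @pi_gt0 R; apply/normr0_eq0.
apply: (@cos_inj R); rewrite ?in_itv /= ?normr_ge0 ?lexx //=; try lra.
by rewrite cos0 -e; case: (ler0P x) => _; rewrite ?cosN.
Qed.

End RealFacts.

Arguments MVT_between {R f a b s t}.
Arguments ler_dist_derive1_bound {R f a b K s t}.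
Arguments cos_eq1_norm_lt_pihalf {R x}.
Arguments neq_derive1_away0 {R f a b M delta s t}.
Arguments bounded_on_itv {R I g a b}.

Section Means.
Variables (R : numFieldType) (T : finType) (A : {set T}) (F : T -> R).

Lemma mean_gt0 : (0 < #|A|)%N -> (forall m, m \in A -> 0 < F m) ->
  0 < #|A|%:R^-1 * \sum_(m in A) F m.
Proof.
move=> /card_gt0P[m0 m0A] F0; rewrite mulr_gt0 ?invr_gt0 ?ltr0n //.
  by apply/card_gt0P; exists m0.
rewrite (bigD1 m0) //= ltr_pwDl ?F0 // sumr_ge0 // => m /andP[mA _].
exact/ltW/F0.
Qed.

Lemma mean_eq1 : (forall m, m \in A -> F m <= 1) ->
  #|A|%:R^-1 * \sum_(m in A) F m = 1 -> forall m, m \in A -> F m = 1.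
Proof.
move=> F1 e.
have eS : \sum_(m in A) F m = #|A|%:R by move: e; rewrite mulrC => /divr1_eq.
have : \sum_(m in A) (1 - F m) = 0 by rewrite sumrB sumr_const eS subrr.
move=> /psumr_eq0P F1eq m mA; apply/eqP; rewrite eq_sym -subr_eq0.
by apply/eqP/F1eq => // k kA; rewrite subr_ge0 F1.
Qed.

End Means.

Arguments mean_gt0 {R T A F}.
Arguments mean_eq1 {R T A F}.

Section UnitVector.
Variables (R : realFieldType) (d : nat) (u : 'I_d -> R).
Hypothesis u_unit : \sum_(i < d) u i ^+ 2 = 1.

Lemma unit_coord_le1 i : `|u i| <= 1.
Proof.
rewrite -(@expr_le1 _ 2) // real_normK ?num_real // -u_unit.
by rewrite (bigD1 i) //= lerDl sumr_ge0 // => k _; exact: sqr_ge0.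
Qed.

Lemma unit_big_coord : exists i, d%:R^-1 <= `|u i|.
Proof.
have d_gt0 : (0 < d)%N.
  by case: d u u_unit => // v; rewrite big_ord0 => /eqP; rewrite eq_sym oner_eq0.
have [i hi] : exists i, d%:R^-1 <= u i ^+ 2.
  apply/existsP; apply: contraT => /existsPn small.
  have : \sum_(k < d) u k ^+ 2 < \sum_(k < d) d%:R^-1.
    apply: ltr_sum => [|k _]; last by rewrite ltNge small.
    by apply/hasP; exists (Ordinal d_gt0); rewrite ?mem_index_enum.
  rewrite u_unit sumr_const card_ord -[_ *+ d]mulr_natr.
  by rewrite mulVf ?ltxx // pnatr_eq0 -lt0n.
exists i; apply: le_trans hi _; rewrite -real_normK ?num_real //.
by rewrite expr2 ler_piMr ?normr_ge0 ?unit_coord_le1.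
Qed.

End UnitVector.

Arguments unit_coord_le1 {R d u}.
Arguments unit_big_coord {R d u}.

Section Lattice.
Variables (d E : nat).
Local Notation lat := {ffun 'I_d -> 'I_(2 * E).+1}.
Implicit Types (m : lat).

Definition lat_perm (s : 'S_d) m : lat := [ffun k => m (s k)].

Definition lat_flip (i : 'I_d) m : lat :=
  [ffun k => if k == i then rev_ord (m k) else m k].

Lemma lat_coord_perm s m k : lat_coord (lat_perm s m) k = lat_coord m (s k).
Proof. by rewrite /lat_coord ffunE. Qed.

Lemma lat_coord_flip i m k :
  lat_coord (lat_flip i m) k = if k == i then - lat_coord m k else lat_coord m k.
Proof.
rewrite /lat_coord ffunE; case: eqP => // _ /=.
have := ltn_ord (m k); rewrite ltnS subSS => hk.
by rewrite -subzn // PoszM; lia.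
Qed.

Lemma latE_perm s {m} : m \in latE d E -> lat_perm s m \in latE d E.
Proof.
rewrite !inE => /eqP <-; apply/eqP.
rewrite [RHS](reindex_inj (@perm_inj _ s)).
by apply: eq_bigr => k _; rewrite lat_coord_perm.
Qed.

Lemma latE_flip i {m} : m \in latE d E -> lat_flip i m \in latE d E.
Proof.
rewrite !inE => /eqP <-; apply/eqP; apply: eq_bigr => k _.
by rewrite lat_coord_flip; case: eqP => // _; rewrite sqrrN.
Qed.

Lemma latE_coord_neq0 {m} : (0 < E)%N -> m \in latE d E ->
  exists j, lat_coord m j != 0.
Proof.
move=> E0 mE; apply/existsP; apply: contraTT mE => /existsPn zero; rewrite inE.
rewrite big1 => [|k _]; first by rewrite eq_sym eqz_nat -lt0n E0.
by have /negPn/eqP -> := zero k.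
Qed.

Lemma lat_coord_sqr_le m j : m \in latE d E -> lat_coord m j ^+ 2 <= E%:Z.
Proof.
rewrite inE => /eqP <-.
by rewrite (bigD1 j) //= lerDl sumr_ge0 // => k _; exact: sqr_ge0.
Qed.

Variable R : realType.
Implicit Types (v : 'I_d -> R).

Definition lat_dot m v : R := \sum_(j < d) (lat_coord m j)%:~R * v j.

Lemma lat_dot_flip i m v :
  lat_dot (lat_flip i m) v = lat_dot m v - 2 * ((lat_coord m i)%:~R * v i).
Proof.
rewrite /lat_dot (bigD1 i) // [in RHS](bigD1 i) //= lat_coord_flip eqxx.
rewrite (eq_bigr (fun j => (lat_coord m j)%:~R * v j)) => [|j /negPf ji].
  by rewrite rmorphN /=; ring.
by rewrite lat_coord_flip ji.
Qed.

Lemma latE_orthogonal_eq0 v i : (0 < E)%N -> (0 < #|latE d E|)%N ->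
  (forall m, m \in latE d E -> lat_dot m v = 0) -> v i = 0.
Proof.
(* Move a nonzero coordinate of some [m0] to position [i] and flip its sign:
   the dot product changes by [2 mu_i v_i]. *)
move=> E0 /card_gt0P[m0 m0E] orth.
have [j m0j] := latE_coord_neq0 E0 m0E.
pose m1 := lat_perm (tperm i j) m0.
have m1E : m1 \in latE d E := latE_perm _ m0E.
have := orth _ (latE_flip i m1E); rewrite lat_dot_flip orth // sub0r.
move/eqP; rewrite oppr_eq0 !mulf_eq0 pnatr_eq0 intr_eq0 lat_coord_perm tpermL.
by rewrite (negPf m0j) /= => /eqP.
Qed.

Lemma norm_lat_dot_le m v eta : m \in latE d E -> (forall j, `|v j| <= eta) ->
  `|lat_dot m v| <= d%:R * (Num.sqrt E%:R * eta).
Proof.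
move=> mE hv; apply: le_trans (ler_norm_sum _ _ _) _.
rewrite mulr_natl -[X in _ *+ X]card_ord -sumr_const; apply: ler_sum => j _.
rewrite normrM ler_pM ?normr_ge0 //.
rewrite -sqrtr_sqr ler_sqrt ?ler0n // -[E%:R]/((E%:Z)%:~R : R).
by rewrite -rmorphXn ler_int lat_coord_sqr_le.
Qed.

Definition lat_mean_cos v : R :=
  #|latE d E|%:R^-1 * \sum_(m in latE d E) cos (2 * pi * lat_dot m v).

Lemma lat_mean_cos_neq_pm1 v i : (0 < E)%N -> (0 < #|latE d E|)%N ->
  (forall m, m \in latE d E -> `|lat_dot m v| < 4^-1) -> v i != 0 ->
  lat_mean_cos v != 1 /\ lat_mean_cos v != -1.
Proof.
move=> E0 NE small vi0; have pi0 := @pi_gt0 R.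
have arg_small m : m \in latE d E -> `|2 * pi * lat_dot m v| < pi / 2.
  move=> /small; rewrite normrM [`|2 * pi|]gtr0_norm ?mulr_gt0 //.
  by have := normr_ge0 (lat_dot m v); nra.
have cos_gt0 m : m \in latE d E -> 0 < cos (2 * pi * lat_dot m v).
  by move=> /arg_small; rewrite ltr_norml => /cos_gt0_pihalf.
split.
- apply: contra_neq vi0 => /(mean_eq1 (fun m _ => cos_le1 _)) cos1.
  apply: (latE_orthogonal_eq0 _ _ E0 NE) => m mE.
  have /eqP := cos_eq1_norm_lt_pihalf (arg_small m mE) (cos1 m mE).
  by rewrite !mulf_eq0 pnatr_eq0 (negPf (lt0r_neq0 pi0)) => /eqP.
- apply/negP => /eqP r1; have := mean_gt0 NE cos_gt0.
  by rewrite -/(lat_mean_cos v) r1; lra.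
Qed.

End Lattice.

Arguments lat_mean_cos d E {R} v.
Arguments norm_lat_dot_le {d E R m v eta}.
Arguments lat_mean_cos_neq_pm1 {d E R v i}.

Lemma exists_step_constant {R : realFieldType} {d M : R} : 0 < d -> 0 <= M ->
  exists2 c, 0 < c & d * c <= 4^-1 /\ M * c < d^-1.
Proof.
move=> d_gt0 M_ge0; pose c := (4 * d * (M + 1))^-1.
have c_gt0 : 0 < c by rewrite invr_gt0 !mulr_gt0 //; lra.
have cE : c * (4 * d * (M + 1)) = 1 by rewrite mulVf // lt0r_neq0 // !mulr_gt0 //; lra.
have dc_gt0 := mulr_gt0 d_gt0 c_gt0.
exists c => //; split; first by have := mulr_ge0 (ltW dc_gt0) M_ge0; lra.
by rewrite -(ltr_pM2l d_gt0) mulfV ?lt0r_neq0 //; lra.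
Qed.

Section UnitSpeedCurve.
Variables (R : realType) (d : nat) (L M : R) (gamma : 'I_d -> R -> R).
Hypothesis gamma_derivable : forall i x, derivable (gamma i) x 1.
Hypothesis gamma'_derivable : forall i x, derivable (derive1 (gamma i)) x 1.
Hypothesis gamma_unit_speed : forall t, 0 <= t <= L ->
  \sum_(i < d) derive1 (gamma i) t ^+ 2 = 1.
Hypothesis gamma''_bounded : forall i t, 0 <= t <= L ->
  `|derive1 (derive1 (gamma i)) t| <= M.

Lemma curve_coord_dist_le j t1 t2 : 0 <= t1 <= L -> 0 <= t2 <= L ->
  `|gamma j t1 - gamma j t2| <= `|t1 - t2|.
Proof.
move=> ht1 ht2; rewrite -[`|t1 - t2|]mul1r.
apply: ler_dist_derive1_bound (gamma_derivable j) _ ht2 ht1 => t ht.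
exact: (unit_coord_le1 (u := fun k => derive1 (gamma k) t) (gamma_unit_speed _ ht)).
Qed.

Lemma curve_chord_coord_neq0 t1 t2 : 0 <= t1 <= L -> 0 <= t2 <= L -> t1 != t2 ->
  M * `|t2 - t1| < d%:R^-1 -> exists i, gamma i t1 - gamma i t2 != 0.
Proof.
move=> ht1 ht2 t12 small.
have [i big_i] :=
  unit_big_coord (u := fun k => derive1 (gamma k) t1) (gamma_unit_speed _ ht1).
exists i; rewrite subr_eq0 eq_sym.
exact: neq_derive1_away0 (gamma_derivable i) (gamma'_derivable i) (gamma''_bounded i)
  ht1 ht2 t12 big_i small.
Qed.

End UnitSpeedCurve.

Arguments curve_coord_dist_le {R d L gamma}.
Arguments curve_chord_coord_neq0 {R d L M gamma}.

Theorem lemma2p4 (R : realType) (d : nat) (hd : (3 <= d)%N) (L : R)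
  (gamma : 'I_d -> R -> R)
  (gamma_smooth : forall (i : 'I_d) (n : nat) (t : R),
      derivable (derive1n n (gamma i)) t 1)
  (gamma_unit_speed : forall t : R, 0 <= t <= L ->
      \sum_(i < d) (derive1 (gamma i) t) ^+ 2 = 1) :
  exists c0 : R, 0 < c0 /\
    forall E : nat, (0 < E)%N -> (0 < #|latE d E|)%N ->
    forall t1 t2 : R, 0 <= t1 <= L -> 0 <= t2 <= L -> t1 != t2 ->
      `|t2 - t1| < c0 / Num.sqrt (E%:R) ->
      @cov_r R d E gamma t1 t2 != 1 /\ @cov_r R d E gamma t1 t2 != -1.
Proof.
have [L_lt0|L_ge0] := ltP L 0.
  by exists 1; split => // E _ _ t1 t2 /andP[? ?]; lra.
have d_gt0 : 0 < d%:R :> R by rewrite ltr0n; lia.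
have dg i x : derivable (gamma i) x 1 by rewrite -[gamma i]derive1n0.
have dg1 i x : derivable (derive1 (gamma i)) x 1 by rewrite -derive1n1.
have dg2 i x : derivable (derive1 (derive1 (gamma i))) x 1.
  by have := gamma_smooth i 2 x; rewrite derive1nS derive1n1.
have [M M_ge0 bound2] := bounded_on_itv
  (fun i => derivable_within_continuous (fun x _ => dg2 i x)) L_ge0.
have [c0 c0_gt0 [dc0 Mc0]] := exists_step_constant d_gt0 M_ge0.
exists c0; split => // E E0 NE t1 t2 ht1 ht2 t12 small_step.
have sqrtE_ge1 : 1 <= Num.sqrt (E%:R : R) by rewrite -{1}sqrtr1 ler_sqrt ?ler0n // ler1n.
have step_c0 : Num.sqrt E%:R * `|t2 - t1| < c0.
  by move: small_step; rewrite ltr_pdivlMr ?(lt_le_trans ltr01 sqrtE_ge1) // mulrC.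
have step_lt : `|t2 - t1| < c0 by apply: le_lt_trans step_c0; rewrite ler_peMl.
pose v j := gamma j t1 - gamma j t2.
have [i vi_neq0] : exists i, v i != 0.
  apply: (curve_chord_coord_neq0 dg dg1 gamma_unit_speed bound2) => //.
  by apply: le_lt_trans _ Mc0; rewrite ler_wpM2l // ltW.
have v_le j : `|v j| <= `|t2 - t1|.
  by rewrite distrC; apply: (curve_coord_dist_le dg gamma_unit_speed).
have -> : cov_r E gamma t1 t2 = lat_mean_cos d E v by [].
apply: (lat_mean_cos_neq_pm1 E0 NE _ vi_neq0) => m mE.
apply: le_lt_trans (norm_lat_dot_le mE v_le) _.
by apply: lt_le_trans dc0; rewrite ltr_pM2l.
Qed.
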